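(* Let $\mathbb F$ be a field, $d\ge1$, $\psi\in\mathbb F^d$, $j\ge 1$ an integer, $\mathcal B\subseteq[d]$ with $|\mathcal B|\le j-1$, $m=j-|\mathcal B|-1$, and $x\in[d]$. Let $\sigma_P\in\mathbb Z^d$ and let $\mathbf P$ be an arbitrary matrix over $\mathbb F$ with rows indexed by $[d]$ and columns indexed by $j$-subsets of $[d]$. Define $\sigma_Q\in\mathbb Z^d$ by $\sigma_Q(i)=1+\sigma_P(i)+\mathrm{ind}_{\mathcal B\cup\{i\}}(i)$. Let $\mathbf Q$ be a $(d;m)$ signed determinant message matrix with signature $\sigma_Q$, let $\mathbf\Delta$ be the injection matrix defined below, and $\bar{\mathbf Q}=\mathbf Q+\mathbf\Delta$. Then for every $m$-subset $\mathcal I\subseteq[d]$, $$\sum_{y=1}^d\psi_y\bar{\mathbf Q}_{y,\mathcal I}=\sum_{i\in\mathcal I}(-1)^{\sigma_Q(i)+\mathrm{ind}_{\mathcal I}(i)}\big[\bar{\mathbf Q}\,\Xi^{(m)}_{\sigma_Q,\psi}\big]_{i,\mathcal I\setminus\{i\}}-\mathbb 1\{\mathcal I\cap\mathcal B=\varnothing\}\,\big[\mathbf P\,\Xi^{(j)}_{\sigma_P,\psi}\big]_{x,\mathcal I\cup\mathcal B}.$$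
   Context: Notation: $[d]=\{1,\dots,d\}$; $\mathrm{ind}_{\mathcal I}(x)=|\{y\in\mathcal I:y\le x\}|$; $\max\varnothing=-\infty$. $(d;m)$ signed determinant message matrix with signature $\sigma$: choose values $v_{x,\mathcal X}\in\mathbb F$ for every $m$-subset $\mathcal X\subseteq[d]$ and $x\in\mathcal X$, and $w_{y,\mathcal Y}\in\mathbb F$ for every $(m+1)$-subset $\mathcal Y\subseteq[d]$ and $y\in\mathcal Y$, satisfying $\sum_{y\in\mathcal Y}(-1)^{\mathrm{ind}_{\mathcal Y}(y)}w_{y,\mathcal Y}=0$ for every such $\mathcal Y$. The matrix has rows $x\in[d]$, columns $m$-subsets $\mathcal I\subseteq[d]$, entries $(-1)^{\sigma(x)}v_{x,\mathcal I}$ if $x\in\mathcal I$ and $(-1)^{\sigma(x)}w_{x,\mathcal I\cup\{x\}}$ if $x\notin\mathcal I$ (for $m=0$ it is the all-zero $d\times1$ matrix with column $\varnothing$). Repair-encoder matrix $\Xi^{(m)}_{\sigma,\psi}$: rows $m$-subsets $\mathcal I$, columns $(m-1)$-subsets $\mathcal J$ of $[d]$, entry $(-1)^{\sigma(y)+\mathrm{ind}_{\mathcal I}(y)}\psi_y$ if $\mathcal J\subseteq\mathcal I$, $\mathcal I\setminus\mathcal J=\{y\}$, and $0$ otherwise (for $m=0$ it has no columns). Injection matrix $\mathbf\Delta$: rows $i\in[d]$, columns $m$-subsets $\mathcal I\subseteq[d]$, with $\mathbf\Delta_{i,\mathcal I}=(-1)^{1+\sigma_P(i)+\mathrm{ind}_{\mathcal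 I\cup\{i\}\cup\mathcal B}(i)}\,\mathbf P_{x,\mathcal I\cup\{i\}\cup\mathcal B}$ if $i>\max\mathcal I$, $i\notin\mathcal B$ and $\mathcal I\cap\mathcal B=\varnothing$, and $\mathbf\Delta_{i,\mathcal I}=0$ otherwise. *)

(* [d] = {1..d} is modelled by 'I_d (0-based, same order). *)
From HB Require Import structures.
From mathcomp Require Import all_boot all_order all_algebra.
Set Implicit Arguments. Unset Strict Implicit. Unset Printing Implicit Defensive.
Import Order.TTheory GRing.Theory Num.Theory.
Local Open Scope ring_scope.

Definition sgnz (F : fieldType) (z : int) : F := (-1) ^ z.

Definition ind d (I : {set 'I_d}) (x : 'I_d) : nat := #|[set y in I | (y <= x)%N]|.

(* A "matrix" with rows 'I_d and columns subsets of 'I_d (only the columns of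
   the relevant cardinality matter). *)
Definition smat (F : fieldType) d := 'I_d -> {set 'I_d} -> F.

Definition smul (F : fieldType) d (n : nat) (A : 'I_d -> {set 'I_d} -> F)
  (B : {set 'I_d} -> {set 'I_d} -> F) (i : 'I_d) (J : {set 'I_d}) : F :=
  \sum_(K : {set 'I_d} | #|K| == n) A i K * B K J.

Definition Xi (F : fieldType) d (sigma : 'I_d -> int) (psi : 'I_d -> F)
  (I J : {set 'I_d}) : F :=
  match [pick y | (J \subset I) && (I :\: J == [set y])] with
  | Some y => sgnz F (sigma y + (ind I y)%:Z) * psi y
  | None => 0
  end.

Definition is_sdmm (F : fieldType) d (m : nat) (sigma : 'I_d -> int)
  (Q : smat F d) : Prop :=
  exists (v w : 'I_d -> {set 'I_d} -> F),
    (forall Y : {set 'I_d}, #|Y| = m.+1 ->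
       \sum_(y in Y) sgnz F (ind Y y)%:Z * w y Y = 0) /\
    (forall (x : 'I_d) (I : {set 'I_d}), #|I| = m ->
       Q x I = sgnz F (sigma x) * (if x \in I then v x I else w x (x |: I))).

Definition Delta (F : fieldType) d (sigmaP : 'I_d -> int) (P : smat F d)
  (B : {set 'I_d}) (x : 'I_d) (i : 'I_d) (I : {set 'I_d}) : F :=
  if [forall y in I, (y < i)%N] && (i \notin B) && [disjoint I & B]
  then sgnz F (1 + sigmaP i + (ind (I :|: [set i] :|: B) i)%:Z)
       * P x (I :|: [set i] :|: B)
  else 0.

Definition sigmaQ d (sigmaP : 'I_d -> int) (B : {set 'I_d}) (i : 'I_d) : int :=
  1 + sigmaP i + (ind (B :|: [set i]) i)%:Z.

From HB Require Import structures.
From mathcomp Require Import all_boot all_order all_algebra.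
From mathcomp Require Import zify ring.
Import GRing.Theory.
Set Implicit Arguments.
Unset Strict Implicit.
Local Open Scope ring_scope.

(* Expanding the product with the repair encoder, [A Xi](i, I\i) is a sum over
   the y outside I\i of A(i, y ∪ I\i) times a signed psi_y.  Splitting off y = i,
   the right-hand sum over i in I becomes
       sum_{i in I} psi_i A(i,I) + sum_{y notin I} sum_{i in I} R_A(I,i,y),
   where R_A(I,i,y) is a "repair term" (linear in A).  The theorem therefore
   reduces to an identity for each fixed y notin I:
   - for a signed determinant message matrix Q, psi_y Q(y,I) = sum_i R_Q(I,i,y):
     this is the alternating relation on the w-values of the column y ∪ I;
   - for the injection matrix Delta, psi_y Delta(y,I) = sum_i R_Delta(I,i,y)
     minus the y-term of [P Xi](x, I ∪ B): at most one of the entries involved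
     is nonzero (that of the largest element of y ∪ I), and its sign matches. *)

Section Signs.
Variable F : fieldType.

Lemma sgnzD (a b : int) : sgnz F (a + b) = sgnz F a * sgnz F b.
Proof. by rewrite /sgnz expfzDr // oppr_eq0 oner_eq0. Qed.

Lemma sgnz_double (k : int) : sgnz F (2 * k) = 1.
Proof.
by rewrite /sgnz -exprz_exp -[(-1 : F) ^ (2:int)]/((-1) ^+ 2) sqrrN expr1n exp1rz.
Qed.

Lemma sgnz_parity (a b : int) : ((a - b) %% 2 = 0)%Z -> sgnz F a = sgnz F b.
Proof.
move=> ab_even; have -> : a = b + 2 * ((a - b) %/ 2)%Z.
  by have := divz_eq (a - b) 2; rewrite ab_even addr0; lia.
by rewrite sgnzD sgnz_double mulr1.
Qed.

Lemma sgnz_sq (a : int) : sgnz F a * sgnz F a = 1.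
Proof. by rewrite -sgnzD -(sgnz_double a); apply: sgnz_parity; lia. Qed.

Lemma sgnz1D (a : int) : sgnz F (1 + a) = - sgnz F a.
Proof. by rewrite sgnzD /sgnz expr1z mulN1r. Qed.

End Signs.

Section Rank.
Variable d : nat.
Implicit Types (A C : {set 'I_d}) (a z : 'I_d).

Lemma ind_setU A C z : [disjoint A & C] -> ind (A :|: C) z = (ind A z + ind C z)%N.
Proof.
move=> AC; rewrite /ind -cardsUI.
have -> : [set y in A | (y <= z)%N] :&: [set y in C | (y <= z)%N] = set0.
  apply/setP => y; rewrite !inE; case yA: (y \in A) => //=.
  by rewrite (disjointFr AC yA) andbF.
by rewrite cards0 addn0; apply: eq_card => y; rewrite !inE andb_orl.
Qed.

Lemma ind_setU1 a A z : a \notin A -> ind (a |: A) z = ((a <= z) + ind A z)%N.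
Proof.
move=> aA; rewrite ind_setU ?disjoints1 //; congr (_ + _)%N; rewrite /ind.
case: leqP => [az|za].
  by rewrite (_ : [set y in [set a] | _] = [set a]) ?cards1 //;
     apply/setP => y; rewrite !inE; case: eqP => // ->.
rewrite (_ : [set y in [set a] | _] = set0) ?cards0 //.
by apply/setP => y; rewrite !inE; case: eqP => // ->; rewrite leqNgt za.
Qed.

Lemma ind_upper A z : {in A, forall y : 'I_d, (y <= z)%N} -> ind A z = #|A|.
Proof.
by move=> Az; apply: eq_card => y; rewrite !inE; case yA: (y \in A); rewrite // Az.
Qed.

End Rank.

(* Exchanging i in I for y outside I flips the sign of the two relevant ranks:
   this is the sign behind the alternating structure of determinant messages. *)
Lemma sgnz_exchange (F : fieldType) d (I : {set 'I_d}) (i y : 'I_d) :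
  i \in I -> y \notin I ->
  sgnz F ((ind I i)%:Z + (ind (y |: (I :\ i)) y)%:Z) =
  - sgnz F ((ind (y |: I) i)%:Z + (ind (y |: I) y)%:Z).
Proof.
move=> iI yI; have iy : (i : nat) <> y by move=> /val_inj e; rewrite -e iI in yI.
have iS : i \notin I :\ i by rewrite !inE eqxx.
have yS : y \notin I :\ i by rewrite !inE (negbTE yI) andbF.
have yI' : y \notin i |: (I :\ i) by rewrite setD1K.
rewrite -sgnz1D; apply: sgnz_parity.
have le_xor : ((y <= i) + (i <= y))%N = 1%N
  by case: (ltngtP y i) => // yi; case: iy.
rewrite -{1 3 4}(setD1K iI) !ind_setU1 // ?leqnn /=.
set ai := ind (I :\ i) i; set ay := ind (I :\ i) y; lia.
Qed.

Lemma card_exchange d m (I : {set 'I_d}) (i y : 'I_d) : #|I| = m -> i \in I -> y \notin I ->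
  #|y |: (I :\ i)| = m.
Proof.
move=> <- iI yI; rewrite cardsU1 !inE (negbTE yI) andbF /=.
by rewrite [in RHS](cardsD1 i) iI.
Qed.

Section RepairEncoder.
Variables (F : fieldType) (d : nat) (sigma : 'I_d -> int) (psi : 'I_d -> F).
Implicit Types (J K : {set 'I_d}) (y : 'I_d).

Lemma Xi_expand K J :
  Xi sigma psi K J =
  \sum_(y | y \notin J) (K == y |: J)%:R * (sgnz F (sigma y + (ind K y)%:Z) * psi y).
Proof.
rewrite /Xi; case: pickP => [y0 /andP [JK /eqP KJ] | none]; last first.
  rewrite big1 // => y yJ; case: eqP => [KyJ|]; last by rewrite mul0r.
  have := none y; rewrite KyJ subsetUr setDUl setDv setU0.
  by rewrite (setDidPl _) ?disjoints1 // eqxx.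
have y0J : y0 \notin J by have := set11 y0; rewrite -KJ inE => /andP [].
have K_eq : K = y0 |: J by rewrite -(setID K J) KJ (setIidPr JK) setUC.
rewrite (bigD1 y0) //= K_eq eqxx mul1r big1 ?addr0 // => y /andP [yJ yy0].
case: eqP => [e|]; last by rewrite mul0r.
have : y \in y0 |: J by rewrite e setU11.
by rewrite !inE (negbTE yy0) (negbTE yJ).
Qed.

Lemma smul_Xi n (A : smat F d) i J : #|J|.+1 = n ->
  smul n A (Xi sigma psi) i J =
  \sum_(y | y \notin J) A i (y |: J) * (sgnz F (sigma y + (ind (y |: J) y)%:Z) * psi y).
Proof.
move=> card_n; rewrite /smul.
under eq_bigr => K _ do rewrite Xi_expand big_distrr.
rewrite exchange_big /=; apply: eq_bigr => y yJ.
rewrite (bigD1 (y |: J)) /=; last by rewrite cardsU1 yJ add1n card_n.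
rewrite eqxx mul1r big1 ?addr0 // => K /andP [_ nK].
by rewrite (negbTE nK) mul0r mulr0.
Qed.

End RepairEncoder.

Section RepairTerms.
Variables (F : fieldType) (d : nat) (sigma : 'I_d -> int) (psi : 'I_d -> F).
Implicit Types (A : smat F d) (I : {set 'I_d}) (i y : 'I_d).

(* The contribution of the column y ∪ (I\i) to the i-th term of the right-hand
   side: the row i of A is repaired with helper y in place of i. *)
Definition repair_term A I i y : F :=
  sgnz F (sigma i + (ind I i)%:Z) *
  (A i (y |: (I :\ i)) * (sgnz F (sigma y + (ind (y |: (I :\ i)) y)%:Z) * psi y)).

Lemma repair_termD A C I i y :
  repair_term (fun z K => A z K + C z K) I i y = repair_term A I i y + repair_term C I i y.
Proof. by rewrite /repair_term; ring. Qed.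

(* The helper y = i gives back psi_i A(i, I); all other helpers lie outside I. *)
Lemma repair_expand m A I : #|I| = m ->
  \sum_(i in I) sgnz F (sigma i + (ind I i)%:Z) * smul m A (Xi sigma psi) i (I :\ i) =
  \sum_(i in I) psi i * A i I + \sum_(y | y \notin I) \sum_(i in I) repair_term A I i y.
Proof.
move=> cardI; rewrite (exchange_big _ _ _ (fun y => y \notin I)) -big_split /=.
apply: eq_bigr => i iI.
rewrite smul_Xi; last by rewrite -cardI [in RHS](cardsD1 i) iI.
rewrite big_distrr /= (bigD1 i) /=; last by rewrite !inE eqxx.
rewrite setD1K //; congr (_ + _).
  by rewrite mulrCA [_ * (_ * psi i)]mulrA sgnz_sq mul1r mulrC.
apply: eq_big => // y; rewrite !inE; case: (y =P i) => [->|] /=; first by rewrite iI.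
by rewrite andbT.
Qed.

(* Both sides are multiples of the w-values of the column Y = y ∪ I, and the
   identity is the alternating relation on that column. *)
Lemma sdmm_repair m Q I y : is_sdmm m sigma Q -> #|I| = m -> y \notin I ->
  psi y * Q y I = \sum_(i in I) repair_term Q I i y.
Proof.
case=> v [w [alt Q_def]] cardI yI; set Y := y |: I.
have alt_I : \sum_(z in I) sgnz F (ind Y z)%:Z * w z Y = - (sgnz F (ind Y y)%:Z * w y Y).
  apply/eqP; rewrite -addr_eq0 addrC -big_setU1 //=.
  by apply/eqP/alt; rewrite cardsU1 yI cardI.
have column_term i : i \in I -> repair_term Q I i y =
    - (sgnz F (sigma y) * sgnz F (ind Y y)%:Z * psi y) * (sgnz F (ind Y i)%:Z * w i Y).
  move=> iI; rewrite /repair_term Q_def; last exact: card_exchange cardI iI yI.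
  have iyI : i \in y |: (I :\ i) = false.
    by rewrite !inE eqxx orbF; apply: contraNF yI => /eqP <-.
  have -> : i |: (y |: (I :\ i)) = Y by rewrite setUCA setD1K.
  have sg : sgnz F (sigma i + (ind I i)%:Z) * sgnz F (sigma i) *
            sgnz F (sigma y + (ind (y |: (I :\ i)) y)%:Z) =
            - (sgnz F (sigma y) * sgnz F (ind Y y)%:Z * sgnz F (ind Y i)%:Z).
    rewrite !sgnzD; transitivity (sgnz F (sigma i) * sgnz F (sigma i) * sgnz F (sigma y) *
      sgnz F ((ind I i)%:Z + (ind (y |: (I :\ i)) y)%:Z)); first by rewrite sgnzD; ring.
    by rewrite sgnz_exchange // sgnz_sq sgnzD; ring.
  rewrite iyI; transitivity (sgnz F (sigma i + (ind I i)%:Z) * sgnz F (sigma i) *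
    sgnz F (sigma y + (ind (y |: (I :\ i)) y)%:Z) * w i Y * psi y); first by ring.
  by rewrite sg; ring.
rewrite (eq_bigr _ column_term) -big_distrr /= alt_I Q_def // (negbTE yI).
transitivity (psi y * (sgnz F (sigma y) * w y Y) *
              (sgnz F (ind Y y)%:Z * sgnz F (ind Y y)%:Z)); first by rewrite sgnz_sq mulr1.
by ring.
Qed.

End RepairTerms.

Lemma disjoint_setU1 (T : finType) (a : T) (A C : {set T}) :
  [disjoint a |: A & C] = (a \notin C) && [disjoint A & C].
Proof. by rewrite -setI_eq0 setIUl setU_eq0 !setI_eq0 disjoints1. Qed.

Section Injection.
Variables (F : fieldType) (d : nat) (psi : 'I_d -> F) (sigmaP : 'I_d -> int).
Variables (P : smat F d) (B : {set 'I_d}) (x : 'I_d).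
Implicit Types (I K : {set 'I_d}) (i y z : 'I_d).

Local Notation D := (Delta sigmaP P B x).

Lemma Delta_eq0_above i K z : z \in K -> (i <= z)%N -> D i K = 0.
Proof.
move=> zK iz; rewrite /Delta (_ : [forall y in K, _] = false) //.
by apply/forall_inP => /(_ z zK); rewrite ltnNge iz.
Qed.

Lemma Delta_eq0_meet i K : ~~ [disjoint i |: K & B] -> D i K = 0.
Proof. by rewrite /Delta disjoint_setU1 -andbA => /negbTE ->; rewrite andbF. Qed.

Lemma Delta_top i K : {in K, forall z, (z < i)%N} -> [disjoint i |: K & B] ->
  D i K = sgnz F (1 + sigmaP i + (ind (i |: (K :|: B)) i)%:Z) * P x (i |: (K :|: B)).
Proof.
move=> Ki; rewrite disjoint_setU1 => /andP [iB KB].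
rewrite /Delta iB KB (_ : [forall y in K, _] = true); last by apply/forall_inP.
by rewrite /= setUAC setUC.
Qed.

(* The term of [P Xi](x, I ∪ B) coming from the column y ∪ I ∪ B. *)
Definition injected_term I y : F :=
  P x (y |: (I :|: B)) * (sgnz F (sigmaP y + (ind (y |: (I :|: B)) y)%:Z) * psi y).

(* If y is the largest element of y ∪ I, only the entry Delta(y, I) survives. *)
Lemma Delta_repair_helper_max I y : {in I, forall z, (z < y)%N} ->
  [disjoint y |: I & B] ->
  psi y * D y I = \sum_(i in I) repair_term (sigmaQ sigmaP B) psi D I i y - injected_term I y.
Proof.
move=> Iy yIB; rewrite big1 ?sub0r => [|i iI]; last first.
  rewrite /repair_term (Delta_eq0_above (z := y)) ?mul0r ?mulr0 ?setU11 //.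
  exact: ltnW (Iy i iI).
by rewrite Delta_top // /injected_term -addrA sgnz1D; ring.
Qed.

(* If i0 in I is the largest element of y ∪ I, only the repair term of i0 survives,
   and its sign is that of the y-term of [P Xi](x, I ∪ B). *)
Lemma Delta_repair_row_max I y i0 : i0 \in I -> y \notin I ->
  {in y |: I, forall z, (z <= i0)%N} -> [disjoint y |: I & B] ->
  psi y * D y I = \sum_(i in I) repair_term (sigmaQ sigmaP B) psi D I i y - injected_term I y.
Proof.
move=> i0I yI top; rewrite disjoint_setU1 => /andP [yB IB].
have y_i0 : (y < i0)%N.
  rewrite ltn_neqAle top ?setU11 // andbT; apply: contraNneq yI => /val_inj ->.
  exact: i0I.
rewrite (Delta_eq0_above (z := i0)) ?(ltnW y_i0) // mulr0 (bigD1 i0) //= big1 ?addr0;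
  last first.
  move=> i /andP [iI i_i0]; rewrite /repair_term (Delta_eq0_above (z := i0)) ?mul0r ?mulr0 //.
    by rewrite !inE (eq_sym i0 i) i_i0 i0I orbT.
  by rewrite top // !inE iI orbT.
set S := I :\ i0; set J := y |: (I :|: B).
have i0S : i0 \notin S by rewrite !inE eqxx.
have yS : y \notin S by rewrite !inE (negbTE yI) andbF.
have i0B : i0 \notin B by rewrite (disjointFr IB i0I).
have yIB : y \notin I :|: B by rewrite !inE negb_or yI.
have i0J : i0 |: (y |: S :|: B) = J by rewrite setUA setUCA setD1K // -setUA.
rewrite /repair_term Delta_top ?i0J; first last.
- by rewrite setUCA setD1K // disjoint_setU1 yB.
- move=> z; rewrite !inE => /orP [/eqP -> // | /andP [z_i0 zI]].
  by rewrite ltn_neqAle top ?inE ?zI ?orbT // andbT; apply: contra z_i0 => /eqP /val_inj ->.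
have e1 : ind I i0 = #|I| by apply: ind_upper => z zI; rewrite top // !inE zI orbT.
have e2 : ind J i0 = (1 + (#|I| + ind B i0))%N by rewrite ind_setU1 // ind_setU // e1 ltnW.
have e3 : ind (B :|: [set i0]) i0 = (1 + ind B i0)%N by rewrite setUC ind_setU1 // leqnn.
have e4 : ind J y = (1 + (ind S y + ind B y))%N.
  by rewrite ind_setU1 // leqnn ind_setU // -{1}(setD1K i0I) ind_setU1 // leqNgt y_i0.
have e5 : ind (y |: S) y = (1 + ind S y)%N by rewrite ind_setU1 // leqnn.
have e6 : ind (B :|: [set y]) y = (1 + ind B y)%N by rewrite setUC ind_setU1 // leqnn.
have sg : sgnz F (sigmaQ sigmaP B i0 + (ind I i0)%:Z) *
          sgnz F (1 + sigmaP i0 + (ind J i0)%:Z) *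
          sgnz F (sigmaQ sigmaP B y + (ind (y |: S) y)%:Z) =
          sgnz F (sigmaP y + (ind J y)%:Z).
  rewrite /sigmaQ -!sgnzD; apply: sgnz_parity; rewrite e1 e2 e3 e4 e5 e6; lia.
by rewrite /injected_term -/J -/S -sg; ring.
Qed.

(* The injection matrix satisfies the repair identity up to the y-term of
   [P Xi](x, I ∪ B); the case split is on the largest element of y ∪ I. *)
Lemma Delta_repair I y : y \notin I ->
  psi y * D y I = \sum_(i in I) repair_term (sigmaQ sigmaP B) psi D I i y
    - (if [disjoint y |: I & B] then injected_term I y else 0).
Proof.
move=> yI; case: ifPn => [yIB | meetB]; last first.
  rewrite subr0 (Delta_eq0_meet meetB) mulr0 big1 // => i iI.
  by rewrite /repair_term Delta_eq0_meet ?mul0r ?mulr0 // setUCA setD1K.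
case: (arg_maxnP (fun z : 'I_d => val z) (setU11 y I)) => t tyI top.
have : t \in y |: I := tyI.
rewrite !inE => /orP [/eqP t_y | tI]; last exact: Delta_repair_row_max tI yI top yIB.
rewrite {}t_y in top.
apply: Delta_repair_helper_max => // z zI.
have zy : (z <= y)%N := top z (setU1r y zI).
by rewrite ltn_neqAle zy andbT; apply: contraNneq yI => /val_inj <-.
Qed.

End Injection.

Unset Implicit Arguments.

Theorem proposition4 (F : fieldType) (d : nat) (psi : 'I_d -> F) (j : nat)
  (B : {set 'I_d}) (m : nat) (x : 'I_d) (sigmaP : 'I_d -> int) (P : smat F d)
  (Q : smat F d) :
  (0 < d)%N -> (1 <= j)%N -> (#|B| <= j - 1)%N -> m = (j - #|B| - 1)%N ->
  is_sdmm m (sigmaQ sigmaP B) Q ->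
  let Qbar := fun (y : 'I_d) (I : {set 'I_d}) => Q y I + Delta sigmaP P B x y I in
  forall I : {set 'I_d}, #|I| = m ->
    \sum_(y < d) psi y * Qbar y I =
      \sum_(i in I) sgnz F (sigmaQ sigmaP B i + (ind I i)%:Z)
                     * smul m Qbar (Xi (sigmaQ sigmaP B) psi) i (I :\ i)
    - (if [disjoint I & B]
       then smul j P (Xi sigmaP psi) x (I :|: B) else 0).
Proof.
move=> _ j_pos B_small m_def sdmmQ Qbar I cardI.
rewrite (repair_expand _ _ _ cardI) (bigID (fun y => y \in I)) /= -addrA; congr (_ + _).
have column y : y \notin I -> psi y * Qbar y I =
    \sum_(i in I) repair_term (sigmaQ sigmaP B) psi Qbar I i y
    - (if [disjoint y |: I & B] then injected_term psi sigmaP P B x I y else 0).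
  move=> yI; rewrite /Qbar mulrDr (sdmm_repair psi sdmmQ cardI yI).
  rewrite (Delta_repair psi sigmaP P B x yI) addrA -big_split /=.
  by congr (_ - _); apply: eq_bigr => i _; rewrite repair_termD.
rewrite (eq_bigr _ column) sumrB; congr (_ - _).
(* The injected terms are exactly the entries of [P Xi](x, I ∪ B). *)
case: ifPn => IB; last by rewrite big1 // => y _; rewrite disjoint_setU1 (negbTE IB) andbF.
rewrite smul_Xi; last by rewrite cardsU (disjoint_setI0 IB) cards0 cardI; lia.
rewrite -big_mkcondr; apply: eq_bigl => y.
by rewrite disjoint_setU1 IB andbT !inE negb_or.
Qed.
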